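(* (i) If $\alpha\le\frac12$, then $\theta(y;\alpha,\lambda)=1$ for all $y\ge0$ and all $\lambda>0$. (ii) If $\alpha>\frac12$, then $\theta(y;\alpha,\lambda)<1$ for all $y\ge0$ and all $\lambda>0$.
   Context: For a countable set $P\subseteq\mathbb R\times[0,\infty)$, $\Gamma(P)$ denotes the graph on vertex set $P$ in which distinct points $(x,y),(x',y')$ are adjacent iff $|x-x'|<e^{\frac12(y+y')}$. For $\alpha,\lambda>0$, $\mathcal P_{\alpha,\lambda}$ is a Poisson point process on $\mathbb R\times[0,\infty)$ with intensity function $\lambda e^{-\alpha y}$. For $y\ge 0$, $\theta(y;\alpha,\lambda)$ is the probability that $\Gamma(\{(0,y)\}\cup\mathcal P_{\alpha,\lambda})$ contains an infinite connected component containing $(0,y)$. *)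

From HB Require Import structures.
From mathcomp Require Import all_boot all_order all_algebra.
From mathcomp Require Import all_classical all_reals all_analysis.
Set Implicit Arguments. Unset Strict Implicit. Unset Printing Implicit Defensive.
Import Order.TTheory GRing.Theory Num.Theory.
Import numFieldNormedType.Exports.
Local Open Scope classical_set_scope.
Local Open Scope ring_scope.

Section Defs.
Variable R : realType.

Definition halfplane : set (R * R) := [set p | 0 <= p.2].

Definition hadj (p q : R * R) : Prop :=
  p <> q /\ `|p.1 - q.1| < expR ((p.2 + q.2) / 2).

Definition reachable (V : set (R * R)) (p q : R * R) : Prop :=
  exists s : seq (R * R),
    [/\ p \in V, (forall z, z \in s -> z \in V),
        path (fun a b => `[< hadj a b >]) p s & last p s = q].

Definition component (V : set (R * R)) (p : R * R) : set (R * R) :=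
  [set q | reachable V p q].

Definition percolates (y : R) (P : set (R * R)) : Prop :=
  infinite_set (component ([set (0, y)] `|` P) (0, y)).

Definition intensity (alpha lambda : R) (B : set (R * R)) : \bar R :=
  (\int[(@lebesgue_measure R \x @lebesgue_measure R)%E]_(p in B)
      (lambda * expR (- (alpha * p.2)))%:E)%E.

Definition bounded_set2 (B : set (R * R)) : Prop :=
  exists r : R, forall p, B p -> `|p.1| <= r /\ `|p.2| <= r.

Definition count_eq (X B : set (R * R)) (k : nat) : Prop :=
  exists s : seq (R * R), [/\ uniq s, size s = k & X `&` B = [set z | z \in s]].

Definition poisson_pmf (mu : R) (k : nat) : R := expR (- mu) * mu ^+ k / (k`!)%:R.

Definition is_PPP d (Omega : measurableType d) (P : probability Omega R)
    (alpha lambda : R) (X : Omega -> set (R * R)) : Prop :=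
  (forall w, X w `<=` halfplane) /\
  (forall (B : set (R * R)) (k : nat), measurable B -> B `<=` halfplane ->
      bounded_set2 B -> measurable [set w | count_eq (X w) B k]) /\
  (forall (n : nat) (B : 'I_n -> set (R * R)) (k : 'I_n -> nat),
      (forall i, measurable (B i)) -> (forall i, B i `<=` halfplane) ->
      (forall i, bounded_set2 (B i)) ->
      (forall i j, i != j -> B i `&` B j = set0) ->
      P (\bigcap_(i in [set: 'I_n]) [set w | count_eq (X w) (B i) (k i)]) =
      (\prod_(i < n) poisson_pmf (fine (intensity alpha lambda (B i))) (k i))%:E).

End Defs.

From Pilot Require Import Defs.
From HB Require Import structures.
From mathcomp Require Import all_boot all_order all_algebra.
From mathcomp Require Import all_classical all_reals all_analysis.
From mathcomp Require Import measurable_realfun lra.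
Import Order.TTheory GRing.Theory Num.Theory.
Local Open Scope classical_set_scope.
Local Open Scope ring_scope.
Set Implicit Arguments.
Unset Strict Implicit.
Unset Printing Implicit Defensive.

(* A point (x, z) is adjacent to (0, y) iff |x| < e^((y + z)/2), so the
   neighbours of (0, y) at heights in [j, j + 1) lie between two slabs of
   half-width of order e^((y + j)/2), whose Poisson mass is of order
   lambda e^((1/2 - alpha) j + y/2); void probabilities e^(-Lambda) of disjoint
   slabs multiply.  If alpha <= 1/2 these masses are bounded below, so almost
   surely every height is exceeded by some neighbour of (0, y), and its
   component is infinite.  If alpha > 1/2 they are summable, so with
   probability at least e^(-sum Lambda) > 0 all slabs are empty and (0, y) is
   isolated. *)

Section slab.
Variable R : realType.
Implicit Types (alpha lambda a : R) (i j : nat).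

Definition bounded_borel (B : set (R * R)) :=
  [/\ measurable B, B `<=` @halfplane R & bounded_set2 B].

Definition slab a j : set (R * R) := `[- a, a] `*` `[j%:R, j%:R + 1[.

Lemma in_slab a j p : slab a j p <-> - a <= p.1 <= a /\ j%:R <= p.2 < j%:R + 1.
Proof. by case: p => x z; rewrite /slab /= !in_itv. Qed.

Lemma measurable_slab a j : measurable (slab a j).
Proof. exact: measurableX. Qed.

Lemma slab_halfplane a j : slab a j `<=` @halfplane R.
Proof. by move=> p /in_slab[_ /andP[jz _]]; apply: le_trans jz. Qed.

Lemma bounded_slab a j : bounded_set2 (slab a j).
Proof.
exists (a + j%:R + 1) => p /in_slab[/andP[ax xa] /andP[jz zj]].
have j0 : 0 <= j%:R :> R by [].
by rewrite !ler_norml; split; apply/andP; split; lra.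
Qed.

Lemma bounded_borel_slab a j : bounded_borel (slab a j).
Proof. by split; [exact: measurable_slab | exact: slab_halfplane | exact: bounded_slab]. Qed.

Lemma disjoint_slab a b i j : i != j -> slab a i `&` slab b j = set0.
Proof.
move=> ij; apply/seteqP; split => // p [/in_slab[_ /andP[iz zi]] /in_slab[_ /andP[jz zj]]].
have [lt_ij|lt_ji|eq_ij] := ltngtP i j; last by rewrite eq_ij eqxx in ij.
- have : i.+1%:R <= j%:R :> R by rewrite ler_nat.
  by rewrite -natr1; lra.
- have : j.+1%:R <= i%:R :> R by rewrite ler_nat.
  by rewrite -natr1; lra.
Qed.

Lemma lebesgue_slab a j : 0 <= a ->
  ((@lebesgue_measure R \x @lebesgue_measure R) (slab a j) = (2 * a)%:E)%E.
Proof.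
move=> a0; rewrite product_measure1E //.
rewrite [X in X = _](_ : _ = lebesgue_measure `[(- a)%R, a]
                           * lebesgue_measure `[j%:R, (j%:R + 1)%R[)%E //.
rewrite !lebesgue_measure_itv /= !lte_fin ltrDl ltr01 -!EFinD addrAC subrr add0r mule1 opprK.
case: ifPn => [_|]; first by rewrite -mulr2n mulr_natl.
rewrite -leNgt => aa; have -> : a = 0 by lra.
by rewrite mulr0.
Qed.

Lemma measurable_intensity_integrand alpha lambda (D : set (R * R)) :
  measurable_fun D (fun p : R * R => (lambda * expR (- (alpha * p.2)))%:E).
Proof.
apply/measurable_EFinP; apply: measurable_funM => //.
apply: measurableT_comp => //; apply: measurableT_comp => //.
by apply: measurable_funM => //; exact: measurable_funS measurable_snd.
Qed.

Lemma intensity_slab_bounds alpha lambda a j : 0 <= alpha -> 0 <= lambda -> 0 <= a ->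
  lambda * expR (- (alpha * (j%:R + 1))) * (2 * a)
    <= fine (intensity alpha lambda (slab a j))
    <= lambda * expR (- (alpha * j%:R)) * (2 * a).
Proof.
move=> alpha0 lambda0 a0.
have int_cst c : (\int[(@lebesgue_measure R \x @lebesgue_measure R)%E]_(p in slab a j) c%:E)%E
    = (c * (2 * a))%:E.
  rewrite integral_cst; last exact: measurable_slab.
  by rewrite [X in (_ * X)%E](_ : _ = (2 * a)%:E) //; exact: lebesgue_slab.
have lo : ((lambda * expR (- (alpha * (j%:R + 1))) * (2 * a))%:E
    <= intensity alpha lambda (slab a j))%E.
  rewrite -int_cst; apply: ge0_le_integral => //.
  - exact: measurable_slab.
  - by move=> p _; rewrite lee_fin mulr_ge0 ?expR_ge0.
  - exact: measurable_intensity_integrand.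
  - move=> p /in_slab[_ /andP[_ /ltW zj]].
    by rewrite lee_fin ler_wpM2l // ler_expR lerN2 ler_wpM2l.
have hi : (intensity alpha lambda (slab a j)
    <= (lambda * expR (- (alpha * j%:R)) * (2 * a))%:E)%E.
  rewrite -int_cst; apply: ge0_le_integral => //.
  - exact: measurable_slab.
  - by move=> p _; rewrite lee_fin mulr_ge0 ?expR_ge0.
  - exact: measurable_intensity_integrand.
  - move=> p /in_slab[_ /andP[jz _]].
    by rewrite lee_fin ler_wpM2l // ler_expR lerN2 ler_wpM2l.
by case: (intensity _ _ _) lo hi => [r||] //=; rewrite !lee_fin => -> ->.
Qed.

End slab.

Lemma count_eq0 (R : realType) (Y B : set (R * R)) : count_eq Y B 0 <-> Y `&` B = set0.
Proof.
split; first by move=> [[|z s] [_ // _ ->]]; apply/seteqP; split.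
by move=> YB0; exists [::]; split; rewrite // YB0; apply/seteqP; split.
Qed.

Lemma le_exprn_le0 (R : realType) (x : \bar R) (q : R) : `|q| < 1 ->
  (forall n, (x <= (q ^+ n)%:E)%E) -> (x <= 0)%E.
Proof.
move=> q1; case: x => [r rq||] //; last by move/(_ 0%N).
rewrite lee_fin leNgt; apply/negP => r0.
have [N _ qN] := cvgr_lt _ (cvg_expr q1) _ r0.
by have := rq N; rewrite lee_fin leNgt qN /=.
Qed.

Section void_probability.
Context (R : realType) d (Omega : measurableType d) (P : probability Omega R)
  (alpha lambda : R) (X : Omega -> set (R * R)).
Hypothesis PPP_X : is_PPP P alpha lambda X.

Definition void (B : set (R * R)) : set Omega := [set w | count_eq (X w) B 0].

Lemma measurable_void B : bounded_borel B -> measurable (void B).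
Proof. by case: PPP_X => _ [+ _] [mB hB bB]; apply. Qed.

Lemma void_prob n (B : 'I_n -> set (R * R)) :
  (forall i, bounded_borel (B i)) -> (forall i j, i != j -> B i `&` B j = set0) ->
  P (\bigcap_(i in [set: 'I_n]) void (B i)) =
  (expR (- \sum_(i < n) fine (intensity alpha lambda (B i))))%:E.
Proof.
move=> bbB dB; case: PPP_X => _ [_ ->] //; [congr EFin | by move=> i; case: (bbB i)..].
rewrite -sumrN expR_sum; apply: eq_bigr => i _.
by rewrite /Defs.poisson_pmf expr0 mulr1 fact0 divr1.
Qed.

Section void_sequence.
Variable B : nat -> set (R * R).
Hypotheses (bbB : forall j, bounded_borel (B j))
  (dB : forall i j, i != j -> B i `&` B j = set0).

Let voids_upto n := \bigcap_(i in [set: 'I_n]) void (B i).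

Let measurable_voids_upto n : measurable (voids_upto n).
Proof.
apply: fin_bigcap_measurable; first exact: finite_finset.
by move=> i _; apply: measurable_void.
Qed.

Let voids_upto_prob n :
  P (voids_upto n) = (expR (- \sum_(i < n) fine (intensity alpha lambda (B i))))%:E.
Proof. by apply: void_prob => // i j ij; apply: dB. Qed.

Lemma measurable_voids : measurable (\bigcap_j void (B j)).
Proof. by apply: bigcapT_measurable => j; exact: measurable_void. Qed.

Lemma voids_le n : (P (\bigcap_j void (B j))
  <= (expR (- \sum_(i < n) fine (intensity alpha lambda (B i))))%:E)%E.
Proof.
rewrite -voids_upto_prob; apply: le_measure; rewrite ?inE.
- exact: measurable_voids.
- exact: measurable_voids_upto.
- by move=> w Bw i _; exact: Bw.
Qed.

Lemma voids_ge M : (forall n, \sum_(i < n) fine (intensity alpha lambda (B i)) <= M) ->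
  ((expR (- M))%:E <= P (\bigcap_j void (B j)))%E.
Proof.
move=> sumM.
have -> : \bigcap_j void (B j) = \bigcap_n voids_upto n.
  apply/seteqP; split => [w Bw n _ i _|w Fw j _]; first exact: Bw.
  exact: (Fw j.+1 I ord_max).
have cvgF : P \o voids_upto @ \oo --> P (\bigcap_n voids_upto n).
  apply: nonincreasing_cvg_mu => //.
  - exact: le_lt_trans (probability_le1 P (measurable_voids_upto 0)) (ltry _).
  - exact: bigcapT_measurable.
  - move=> m n mn; apply/subsetPset => w Fw i _.
    exact: (Fw (widen_ord mn i) I).
rewrite -(cvg_lim _ cvgF) //; apply: lime_ge; first exact: cvgP cvgF.
by apply: nearW => n /=; rewrite voids_upto_prob lee_fin ler_expR lerN2.
Qed.

Lemma voids_null c : 0 < c -> (forall j, c <= fine (intensity alpha lambda (B j))) ->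
  P (\bigcap_j void (B j)) = 0%E.
Proof.
move=> c0 cB; apply/eqP; rewrite eq_le measure_ge0 andbT.
apply: (@le_exprn_le0 _ _ (expR (- c))).
  by rewrite ger0_norm ?expR_ge0 // expR_lt1 oppr_lt0.
move=> n; apply: le_trans (voids_le n) _.
rewrite lee_fin -expRM_natl ler_expR mulrN lerN2.
by rewrite -[n in n%:R * c]card_ord mulr_natl -sumr_const; apply: ler_sum.
Qed.

End void_sequence.
End void_probability.

Section component.
Variable R : realType.
Implicit Types (V : set (R * R)) (p q : R * R).

Lemma component_refl V p : V p -> component V p p.
Proof. by move=> Vp; exists [::]; split; rewrite ?in_setE. Qed.

Lemma component_hadj V p q : V p -> V q -> hadj p q -> component V p q.
Proof.
move=> Vp Vq pq; exists [:: q]; split => //=.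
- by rewrite in_setE.
- by move=> z; rewrite mem_seq1 => /eqP ->; rewrite in_setE.
- by rewrite andbT; apply/asboolP.
Qed.

Lemma component_isolated V p : (forall q, V q -> ~ hadj p q) -> component V p `<=` [set p].
Proof.
move=> isolated r [s [_ sV ps <-]].
case: s sV ps => [//|q s] sV /andP[/asboolP pq _].
by have /sV := mem_head q s; rewrite in_setE => /isolated.
Qed.

Lemma infinite_set_unbounded (A : set (R * R)) :
  (forall M : R, exists2 z, A z & M < z.2) -> infinite_set A.
Proof.
move=> Aub /finite_seqP[s As].
have [z Az] := Aub (\big[Order.max/0]_(x <- s) x.2).
have zs : z \in s by rewrite As in Az.
by rewrite ltNge (le_bigmax_seq 0 z predT (fun x => x.2) zs).
Qed.

End component.

Section slabs_around_a_point.
Variables (R : realType) (y : R).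
Implicit Types (alpha lambda : R) (j : nat) (z : R * R).

(* The half-widths come from the adjacency rule |x| < e^((y + z)/2) at heights
   z in [j, j + 1): a point of [inner_slab j] other than (0, y) is a neighbour
   of (0, y), and every neighbour at such heights lies in [outer_slab j]. *)
Definition inner_slab j := slab (expR ((y + j%:R) / 2) / 2) j.
Definition outer_slab j := slab (expR ((y + j%:R + 1) / 2)) j.

Lemma hadj_of_inner_slab j z : inner_slab j z -> z <> (0, y) -> hadj (0, y) z.
Proof.
move=> /in_slab[/andP[zl zr] /andP[jz _]] zy; split; first by move=> /esym.
rewrite /= sub0r normrN.
have z1 : `|z.1| <= expR ((y + j%:R) / 2) / 2 by rewrite ler_norml zl zr.
apply: le_lt_trans z1 (lt_le_trans _ (_ : expR ((y + j%:R) / 2) <= _)).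
  by rewrite ltr_pdivrMr // ltr_pMr ?expR_gt0 // ltr1n.
by rewrite ler_expR ler_pM2r // lerD2l.
Qed.

Lemma outer_slab_of_hadj z : 0 <= z.2 -> hadj (0, y) z -> outer_slab (Num.truncn z.2) z.
Proof.
move=> z0 [_ /=]; rewrite sub0r normrN => z1.
have /andP[tz zt] := truncn_itv z0.
apply/in_slab; split; last by rewrite tz /= natr1.
rewrite -ler_norml; apply: (le_trans (ltW z1)).
by rewrite ler_expR ler_pM2r // -addrA lerD2l natr1 ltW.
Qed.

Lemma inner_slab_intensity_ge alpha lambda j :
  0 <= y -> 0 <= alpha -> alpha <= 1 / 2 -> 0 <= lambda ->
  lambda * expR (- alpha) <= fine (intensity alpha lambda (inner_slab j)).
Proof.
move=> y0 alpha0 alpha_half lambda0.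
have w0 : 0 <= expR ((y + j%:R) / 2) / 2 by rewrite divr_ge0 ?expR_ge0.
have [lo _] := andP (intensity_slab_bounds j alpha0 lambda0 w0).
apply: le_trans lo; rewrite [2 * _]mulrC divfK // -mulrA ler_wpM2l // -expRD ler_expR.
have : 0 <= j%:R * (1 / 2 - alpha) by rewrite mulr_ge0 // subr_ge0.
by nra.
Qed.

Lemma outer_slab_intensity_le alpha lambda j : 0 <= alpha -> 0 <= lambda ->
  fine (intensity alpha lambda (outer_slab j))
    <= 2 * lambda * expR ((y + 1) / 2) * expR (1 / 2 - alpha) ^+ j.
Proof.
move=> alpha0 lambda0.
have [_ hi] := andP (intensity_slab_bounds j alpha0 lambda0 (expR_ge0 ((y + j%:R + 1) / 2))).
apply: le_trans hi _; rewrite -expRM_natl -mulrA.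
have -> : expR (- (alpha * j%:R)) * (2 * expR ((y + j%:R + 1) / 2))
    = 2 * expR ((y + 1) / 2) * expR (j%:R * (1 / 2 - alpha)).
  by rewrite mulrCA -!mulrA -!expRD; congr (2 * expR _); lra.
by rewrite !mulrA [lambda * 2]mulrC.
Qed.

End slabs_around_a_point.

Section percolation_from_slabs.
Variables (R : realType) (y : R).
Implicit Type Y : set (R * R).

Lemma percolates_of_inner_slabs Y :
  (forall m, exists2 j, (m <= j)%N & Y `&` inner_slab y j !=set0) -> percolates y Y.
Proof.
move=> Yslabs; apply: infinite_set_unbounded => M.
have [j mj [z [Yz Sz]]] := Yslabs (Num.truncn M).+1.
exists z.
  have [->|zy] := eqVneq z (0, y); first by apply: component_refl; left.
  by apply: component_hadj; [left | right | exact/(hadj_of_inner_slab Sz)/eqP].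
have /in_slab[_ /andP[jz _]] := Sz.
by rewrite (lt_le_trans (truncnS_gt M)) // (le_trans _ jz) // ler_nat.
Qed.

Lemma not_percolates_of_outer_slabs Y : Y `<=` @halfplane R ->
  (forall j, Y `&` outer_slab y j = set0) -> ~ percolates y Y.
Proof.
move=> Yh Yslabs; apply; apply: sub_finite_set (finite_set1 (0, y)).
apply: component_isolated => z [-> [] //|Yz /(outer_slab_of_hadj (Yh _ Yz)) Sz].
by have : (Y `&` outer_slab y (Num.truncn z.2)) z by []; rewrite Yslabs.
Qed.

End percolation_from_slabs.

Section phase_transition.
Context (R : realType) d (Omega : measurableType d) (P : probability Omega R)
  (alpha lambda : R) (X : Omega -> set (R * R)) (y : R).
Hypotheses (PPP_X : is_PPP P alpha lambda X) (lambda0 : 0 < lambda) (y0 : 0 <= y).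

Lemma percolation_ae : 0 <= alpha -> alpha <= 1 / 2 -> {ae P, forall w, percolates y (X w)}.
Proof.
move=> alpha0 alpha_half.
pose tail m := \bigcap_k void X (inner_slab y (m + k)).
apply: (@negligibleS _ _ _ _ (\bigcup_m tail m)).
  move=> w /= not_perc; apply: contrapT => not_tail; apply: not_perc.
  apply: percolates_of_inner_slabs => m.
  have /existsNP[k not_void] : ~ forall k, void X (inner_slab y (m + k)) w.
    by move=> all_void; apply: not_tail; exists m => // k _; exact: all_void.
  exists (m + k)%N; first exact: leq_addr.
  by apply/set0P/eqP => slab0; apply/not_void/count_eq0.
apply: negligible_bigcup => m; exists (tail m); split => //.
- by apply: (measurable_voids PPP_X) => k; exact: bounded_borel_slab.
- apply: (voids_null PPP_X _ _ (c := lambda * expR (- alpha))).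
  + by move=> k; exact: bounded_borel_slab.
  + by move=> i j ij; apply: disjoint_slab; rewrite eqn_add2l.
  + by rewrite mulr_gt0 ?expR_gt0.
  + by move=> k; apply: inner_slab_intensity_ge => //; exact: ltW.
Qed.

Lemma not_percolation_ae : 1 / 2 < alpha -> ~ {ae P, forall w, percolates y (X w)}.
Proof.
move=> alpha_half [A [mA PA0 not_percA]].
have alpha0 : 0 <= alpha by apply: le_trans (ltW alpha_half).
pose q := expR (1 / 2 - alpha); pose K := 2 * lambda * expR ((y + 1) / 2).
have q0 : 0 < q by exact: expR_gt0.
have q1 : `|q| < 1 by rewrite gtr0_norm // expR_lt1 subr_lt0.
pose E := \bigcap_j void X (outer_slab y j).
have EA : E `<=` A.
  move=> w Ew; apply: not_percA; apply: not_percolates_of_outer_slabs.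
    by case: PPP_X.
  by move=> j; apply/count_eq0; exact: Ew.
have : ((expR (- (K / (1 - q))))%:E <= P E)%E.
  apply: (voids_ge PPP_X).
  + by move=> j; exact: bounded_borel_slab.
  + by move=> i j; exact: disjoint_slab.
  + move=> n; apply: le_trans (geometric_le_lim n _ q0 q1); last first.
      by rewrite !mulr_ge0 ?expR_ge0 // ltW.
    rewrite seriesEnat /= big_mkord; apply: ler_sum => i _.
    exact: outer_slab_intensity_le (ltW lambda0).
have PE0 : P E = 0%E.
  apply/eqP; rewrite eq_le measure_ge0 andbT -PA0 le_measure ?inE //.
  by apply: (measurable_voids PPP_X) => j; exact: bounded_borel_slab.
by rewrite PE0 lee_fin leNgt expR_gt0.
Qed.

End phase_transition.

Unset Implicit Arguments.

Theorem lemma2p6 (R : realType) (d : measure_display) (Omega : measurableType d)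
    (P : probability Omega R) (alpha lambda : R) (X : Omega -> set (R * R)) :
  0 < alpha -> 0 < lambda -> is_PPP P alpha lambda X ->
  (alpha <= 1 / 2 -> forall y : R, 0 <= y ->
     {ae P, forall w, percolates y (X w)}) /\
  (1 / 2 < alpha -> forall y : R, 0 <= y ->
     ~ {ae P, forall w, percolates y (X w)}).
Proof.
move=> alpha0 lambda0 PPP_X; split=> [alpha_half y y0 | alpha_half y _].
- exact: percolation_ae PPP_X lambda0 y0 (ltW alpha0) alpha_half.
- exact: not_percolation_ae PPP_X lambda0 alpha_half.
Qed.
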